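(* Consider a convex resource theory closed under tensor products in the sense that $\sigma\in\mathcal F\Rightarrow\sigma^{\otimes n}\in\mathcal F$ for all $n$. Let $\rho$ be a state, $\phi$ a pure state not in $\mathcal F$ (of the output space), $\varepsilon\in(0,1)$, and $n\in\mathbb N$. If there exists a probabilistic resource--non-generating transformation $\rho^{\otimes n}\to\tau$ where $\tau$ is a state with $F(\tau,\phi)\ge1-\varepsilon$, then $n\ge\log_{\Omega_{\mathcal F}(\rho)}\frac{(1-\varepsilon)(1-F_{\mathcal F}(\phi))}{\varepsilon F_{\mathcal F}(\phi)}$.
   Context: Finite dimensions; $A\le B$ means $B-A\ge0$. Each space carries a closed convex set $\mathcal F$ of free density operators. $R_{\max}(X\|Y)=\inf\{\lambda:X\le\lambda Y\}$, $\inf\emptyset=\infty$; $\Omega_{\mathcal F}(\rho)=\inf_{\sigma\in\mathcal F}R_{\max}(\rho\|\sigma)R_{\max}(\sigma\|\rho)$. $F_{\mathcal F}(\phi)=\max_{\sigma\in\mathcal F}\langle\phi|\sigma|\phi\rangle$. Fidelity $F(\rho,\sigma)=\|\sqrt\rho\sqrt\sigma\|_1^2$. $\mathbb O$: completely positive trace-non-increasing maps $\mathcal E$ such that for every free input $\sigma$ there exist a free output $\sigma'$ and $p\in[0,1]$ with $\mathcal E(\sigma)=p\sigma'$. A probabilistic transformation $\omega\to\tau$ exists iff $\tau$ lies in the closure of $\{\mathcal E(\omega)/\mathrm{Tr}\,\mathcal E(\omega):\mathcal E\in\mathbb O,\ \mathrm{Tr}\,\mathcal E(\omega)>0\}$.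 *)

From HB Require Import structures.
From Stdlib Require Import ClassicalEpsilon.
From mathcomp Require Import all_boot all_order all_algebra.
From mathcomp Require Import all_classical all_reals all_analysis.
From mathcomp.real_closed Require Import complex mxtens.
Set Implicit Arguments. Unset Strict Implicit. Unset Printing Implicit Defensive.
Import Order.TTheory GRing.Theory Num.Theory numFieldNormedType.Exports.
Local Open Scope ring_scope.
Local Open Scope classical_set_scope.

Section QRT.
Variable R : realType.
Local Notation C := R[i].

Definition rC (x : R) : C := real_complex R x.

Definition adjmx {m n} (A : 'M[C]_(m, n)) : 'M[C]_(n, m) := (map_mx Num.conj A)^T.

Definition psd {d} (A : 'M[C]_d) : Prop :=
  adjmx A = A /\ forall v : 'cV[C]_d, 0 <= (adjmx v *m A *m v) 0 0.
Definition loewner {d} (A B : 'M[C]_d) : Prop := psd (B - A).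

Definition density {d} (A : 'M[C]_d) : Prop := psd A /\ \tr A = 1.

(* R_max(X||Y) = inf {l : X <= l Y}, inf of the empty set = +oo *)
Definition Rmax {d} (X Y : 'M[C]_d) : \bar R :=
  ereal_inf [set l%:E | l in [set l : R | loewner X (rC l *: Y)]].

Definition Omega {d} (F : set 'M[C]_d) (rho : 'M[C]_d) : \bar R :=
  ereal_inf [set (Rmax rho s * Rmax s rho)%E | s in F].

Definition FF {m} (F : set 'M[C]_m) (phi : 'cV[C]_m) : R :=
  sup [set complex.Re ((adjmx phi *m s *m phi) 0 0) | s in F].

Definition mx_sqrt {d} (A : 'M[C]_d) : 'M[C]_d :=
  epsilon (inhabits 0) (fun B => psd B /\ B *m B = A).

Definition trnorm {d} (A : 'M[C]_d) : R := complex.Re (\tr (mx_sqrt (adjmx A *m A))).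

Definition fidelity {d} (rho sigma : 'M[C]_d) : R :=
  trnorm (mx_sqrt rho *m mx_sqrt sigma) ^+ 2.

Definition unit_vec {m} (phi : 'cV[C]_m) : Prop := adjmx phi *m phi = 1.
Definition pureproj {m} (phi : 'cV[C]_m) : 'M[C]_m := phi *m adjmx phi.

Definition convex_set {d} (F : set 'M[C]_d) : Prop :=
  forall x y (t : R), F x -> F y -> 0 <= t <= 1 ->
    F (rC t *: x + rC (1 - t) *: y).
Definition mx_cvg {d} (u : nat -> 'M[C]_d) (A : 'M[C]_d) : Prop :=
  forall i j, (fun k => complex.Re (u k i j)) @ \oo --> (complex.Re (A i j) : R) /\
              (fun k => complex.Im (u k i j)) @ \oo --> (complex.Im (A i j) : R).
Definition closed_set {d} (F : set 'M[C]_d) : Prop :=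
  forall (u : nat -> 'M[C]_d) A, (forall k, F (u k)) -> mx_cvg u A -> F A.

Definition free_set {d} (F : set 'M[C]_d) : Prop :=
  (exists s, F s) /\ (forall s, F s -> density s) /\ convex_set F /\ closed_set F.

(* complete positivity: id_k (x) E maps psd to psd for every k *)
Definition blk {k a} (X : 'M[C]_(k * a)) (i j : 'I_k) : 'M[C]_a :=
  \matrix_(r, s) X (mxtens_index (i, r)) (mxtens_index (j, s)).
Definition ampl {a b k} (E : 'M[C]_a -> 'M[C]_b) (X : 'M[C]_(k * a)) : 'M[C]_(k * b) :=
  \matrix_(p, q) E (blk X (mxtens_unindex p).1 (mxtens_unindex q).1)
                   (mxtens_unindex p).2 (mxtens_unindex q).2.
Definition linear_map {a b} (E : 'M[C]_a -> 'M[C]_b) : Prop :=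
  forall (c : C) X Y, E (c *: X + Y) = c *: E X + E Y.
Definition CPmap {a b} (E : 'M[C]_a -> 'M[C]_b) : Prop :=
  linear_map E /\ forall k (X : 'M[C]_(k * a)), psd X -> psd (ampl E X).
Definition trace_nonincr {a b} (E : 'M[C]_a -> 'M[C]_b) : Prop :=
  forall X, psd X -> \tr (E X) <= \tr X.
Definition nongen {a b} (Fa : set 'M[C]_a) (Fb : set 'M[C]_b)
  (E : 'M[C]_a -> 'M[C]_b) : Prop :=
  forall s, Fa s -> exists s', Fb s' /\ exists p : R, 0 <= p <= 1 /\ E s = rC p *: s'.
Definition opO {a b} (Fa : set 'M[C]_a) (Fb : set 'M[C]_b)
  (E : 'M[C]_a -> 'M[C]_b) : Prop :=
  CPmap E /\ trace_nonincr E /\ nongen Fa Fb E.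

(* probabilistic transformation omega -> tau: tau lies in the closure of
   { E(omega)/Tr E(omega) : E in O, Tr E(omega) > 0 } *)
Definition prob_trans {a b} (Fa : set 'M[C]_a) (Fb : set 'M[C]_b)
  (omega : 'M[C]_a) (tau : 'M[C]_b) : Prop :=
  forall e : R, 0 < e -> exists E, opO Fa Fb E /\ 0 < \tr (E omega) /\
    forall i j, `| ((\tr (E omega))^-1 *: E omega) i j - tau i j | < rC e.

End QRT.

(* Pick a free state s with rho <= l s and s <= mu rho, where l mu is close to
   Omega(rho).  Both bounds tensorize, with constants l^n and mu^n, and a
   resource non-generating E maps s^n to p s' with s' free, so positivity of E
   gives, for W = E(rho^n) and F = F_F(phi),
     <phi|W|phi> <= l^n p F   and   p (1 - F) <= mu^n (Tr W - <phi|W|phi>).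
   Hence the normalized output has overlap c with phi satisfying
   c (1 - F) <= (l mu)^n F (1 - c).  This constraint is linear in the output,
   so it passes to the closure defining probabilistic transformations; for a
   pure target the fidelity is <phi|tau|phi> >= 1 - eps, which gives
   (1 - eps)(1 - F) <= (l mu)^n F eps.  Letting l mu decrease to Omega(rho)
   and taking logarithms yields the bound. *)

From HB Require Import structures.
From mathcomp Require Import all_boot all_order all_algebra.
From mathcomp Require Import all_classical all_reals all_analysis.
From mathcomp.real_closed Require Import complex mxtens.
From mathcomp Require Import spectral sesquilinear.
From mathcomp Require Import ring lra.
Import Order.TTheory GRing.Theory Num.Theory numFieldNormedType.Exports.
Local Open Scope ring_scope.
Local Open Scope classical_set_scope.

Section RealBounds.
Set Implicit Arguments.
Unset Strict Implicit.
Variable R : realFieldType.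

(* Read [w = <phi|W|phi>], [t = Tr W], [b = <phi|s'|phi>] and [f = F_F(phi)]
   for [W = E X] and [E s = p s']. *)
Lemma nongen_bound_real (w t p b f l mu : R) :
  0 <= w -> 0 <= p -> 0 <= l -> 0 <= mu -> 0 <= b -> b <= f -> f <= 1 ->
  w <= l * p * b -> p * (1 - b) <= mu * (t - w) ->
  w * (1 - f) <= l * mu * f * (t - w).
Proof.
move=> w0 p0 l0 mu0 b0 bf f1 wb pb.
have pf : p * (1 - f) <= mu * (t - w) by apply: le_trans pb; apply: ler_wpM2l; lra.
have muw : 0 <= mu * (t - w) by apply: le_trans pf; apply: mulr_ge0; lra.
have wf : w <= l * p * f by apply: le_trans wb _; apply: ler_wpM2l; rewrite ?mulr_ge0.
have [p_eq0|p_neq0] := eqVneq p 0.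
  have w_eq0 : w = 0.
    by apply/le_anti; rewrite w0 andbT; move: wb; rewrite p_eq0 mulr0 mul0r.
  have := mulr_ge0 (mulr_ge0 l0 (le_trans b0 bf)) muw.
  rewrite w_eq0; lra.
have h1 : w * (p * (1 - f)) <= w * (mu * (t - w)) by apply: ler_wpM2l.
have h2 : w * (mu * (t - w)) <= l * p * f * (mu * (t - w)) by apply: ler_wpM2r.
have p_pos : 0 < p by rewrite lt_neqAle eq_sym p_neq0.
by rewrite -(ler_pM2l p_pos); lra.
Qed.

Lemma fidelity_bound_real (c f M eps : R) :
  0 <= f <= 1 -> 0 <= M -> 1 - eps <= c -> c * (1 - f) <= M * f * (1 - c) ->
  (1 - eps) * (1 - f) <= M * (eps * f).
Proof.
move=> /andP[f0 f1] M0 ceps cM.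
have h1 : (1 - eps) * (1 - f) <= c * (1 - f) by apply: ler_wpM2r; lra.
have h2 : M * f * (1 - c) <= M * f * eps by apply: ler_wpM2l; [apply: mulr_ge0 | lra].
lra.
Qed.

End RealBounds.

Section Limits.
Set Implicit Arguments.
Unset Strict Implicit.
Variable R : realType.

Lemma ler_exprn_of_gt (a O : R) n :
  (forall K, O < K -> a <= K ^+ n) -> a <= O ^+ n.
Proof.
move=> aK; have cvgX : (fun K => K ^+ n) @ O^'+ --> O ^+ n.
  by apply: cvg_at_right_filter; apply: exprn_continuous.
rewrite -(cvg_lim _ cvgX) //; apply: limr_ge; first exact: cvgP cvgX.
by near=> K; apply: aK; near: K; apply: nbhs_right_gt.
Unshelve. all: by end_near.
Qed.

Lemma ln_div_le_of_le_exprn (a O : R) n :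
  1 < O -> a <= O ^+ n -> ln a / ln O <= n%:R.
Proof.
move=> O1 aO; have lnO : 0 < ln O by rewrite ln_gt0.
rewrite ler_pdivrMr //; have [a_le0|a_gt0] := leP a 0.
  by rewrite ln0 // mulr_ge0 // ltW.
rewrite mulr_natl -lnXn; last lra.
by rewrite ler_ln // posrE exprn_gt0 //; lra.
Qed.

End Limits.

Section QuantumResources.
Set Implicit Arguments.
Unset Strict Implicit.
Variable R : realType.
Local Notation C := R[i].
Local Notation Re := complex.Re.

(** * Positive semidefinite matrices *)

Lemma adjmxE {m n} (A : 'M[C]_(m, n)) i j : adjmx A i j = Num.conj (A j i).
Proof. by rewrite !mxE. Qed.

Lemma adjmxK {m n} (A : 'M[C]_(m, n)) : adjmx (adjmx A) = A.
Proof. by apply/matrixP=> i j; rewrite !mxE conjCK. Qed.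

Lemma adjmxM {m n p} (A : 'M[C]_(m, n)) (B : 'M[C]_(n, p)) :
  adjmx (A *m B) = adjmx B *m adjmx A.
Proof. by rewrite /adjmx map_mxM trmx_mul. Qed.

Lemma adjmxD {m n} (A B : 'M[C]_(m, n)) : adjmx (A + B) = adjmx A + adjmx B.
Proof. by apply/matrixP=> i j; rewrite !mxE rmorphD. Qed.

Lemma adjmxB {m n} (A B : 'M[C]_(m, n)) : adjmx (A - B) = adjmx A - adjmx B.
Proof. by apply/matrixP=> i j; rewrite !mxE rmorphB. Qed.

Lemma adjmxZ {m n} (c : C) (A : 'M[C]_(m, n)) :
  adjmx (c *: A) = Num.conj c *: adjmx A.
Proof. by apply/matrixP=> i j; rewrite !mxE rmorphM. Qed.

Lemma adjmx1 {n} : adjmx (1%:M : 'M[C]_n) = 1%:M.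
Proof. by apply/matrixP=> i j; rewrite !mxE rmorph_nat eq_sym. Qed.

Lemma adjmx_tens {m n p q} (A : 'M[C]_(m, n)) (B : 'M[C]_(p, q)) :
  adjmx (A *t B) = adjmx A *t adjmx B.
Proof. by apply/matrixP=> i j; rewrite !mxE rmorphM. Qed.

Lemma trmxC_adjmx {m n} (A : 'M[C]_(m, n)) : (A ^t*)%sesqui = adjmx A.
Proof. by rewrite /adjmx map_trmx. Qed.

Definition qform {n} (A : 'M[C]_n) (v : 'cV[C]_n) : C := (adjmx v *m A *m v) 0 0.

Lemma qformD {n} (A B : 'M[C]_n) v : qform (A + B) v = qform A v + qform B v.
Proof. by rewrite /qform mulmxDr mulmxDl mxE. Qed.

Lemma qformB {n} (A B : 'M[C]_n) v : qform (A - B) v = qform A v - qform B v.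
Proof. by rewrite /qform mulmxBr mulmxBl !mxE. Qed.

Lemma qformZ {n} (c : C) (A : 'M[C]_n) v : qform (c *: A) v = c * qform A v.
Proof. by rewrite /qform -scalemxAr -scalemxAl mxE. Qed.

Lemma qform_conj {a b} (Y : 'M[C]_a) (M : 'M[C]_(a, b)) v :
  qform (adjmx M *m Y *m M) v = qform Y (M *m v).
Proof. by rewrite /qform adjmxM !mulmxA. Qed.

Lemma qform_delta {n} (A : 'M[C]_n) i : qform A (delta_mx i 0) = A i i.
Proof.
rewrite /qform; have -> : adjmx (delta_mx i 0 : 'cV[C]_n) = delta_mx 0 i.
  by apply/matrixP=> a b; rewrite !mxE rmorph_nat andbC.
by rewrite -mulmxA -colE -rowE !mxE.
Qed.

Lemma psd_qform {n} (A : 'M[C]_n) v : psd A -> 0 <= qform A v.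
Proof. by case=> _; apply. Qed.

Lemma psd_gram {a b} (N : 'M[C]_(a, b)) : psd (adjmx N *m N).
Proof.
split=> [|v]; first by rewrite adjmxM adjmxK.
have -> : adjmx v *m (adjmx N *m N) *m v = adjmx (N *m v) *m (N *m v).
  by rewrite adjmxM !mulmxA.
rewrite !mxE; apply: sumr_ge0 => i _; rewrite !mxE mulrC; exact: mul_conjC_ge0.
Qed.

Lemma gram_eq0 {a b} (N : 'M[C]_(a, b)) : adjmx N *m N = 0 -> N = 0.
Proof.
move=> NN0; apply/matrixP=> i j; rewrite mxE.
have /eqP : (adjmx N *m N) j j = 0 by rewrite NN0 mxE.
rewrite mxE (eq_bigr (fun k => Num.conj (N k j) * N k j)) => [|k _]; last first.
  by rewrite !mxE.
rewrite psumr_eq0 => [/allP/(_ i (mem_index_enum _))|k _]; last first.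
  by rewrite mulrC mul_conjC_ge0.
by rewrite /= mulrC mul_conjC_eq0 => /eqP.
Qed.

Lemma psd_conj {a b} (Y : 'M[C]_a) (M : 'M[C]_(a, b)) :
  psd Y -> psd (adjmx M *m Y *m M).
Proof.
move=> [hY pY]; split=> [|v]; first by rewrite !adjmxM adjmxK hY mulmxA.
by have := pY (M *m v); rewrite -/(qform _ _) -qform_conj.
Qed.

Lemma psd1 {n} : psd (1%:M : 'M[C]_n).
Proof. by have := psd_gram (1%:M : 'M[C]_n); rewrite adjmx1 mulmx1. Qed.

Lemma psdD {n} (A B : 'M[C]_n) : psd A -> psd B -> psd (A + B).
Proof.
move=> [hA pA] [hB pB]; split=> [|v]; first by rewrite adjmxD hA hB.
by have := qformD A B v; rewrite /qform => ->; apply: addr_ge0.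
Qed.

Lemma psd0 {n} : psd (0 : 'M[C]_n).
Proof. by have := psd_conj (0 : 'M[C]_n) psd1; rewrite mulmx0. Qed.

Lemma psdZ {n} (c : C) (A : 'M[C]_n) : 0 <= c -> psd A -> psd (c *: A).
Proof.
move=> c0 [hA pA]; split=> [|v]; first by rewrite adjmxZ hA conj_Creal ?ger0_real.
by have := qformZ c A v; rewrite /qform => ->; apply: mulr_ge0.
Qed.

Lemma psd_tr_ge0 {n} (A : 'M[C]_n) : psd A -> 0 <= \tr A.
Proof.
by move=> pA; apply: sumr_ge0 => i _; rewrite -qform_delta; apply: psd_qform.
Qed.

Lemma loewner_qform {n} (A B : 'M[C]_n) v : loewner A B -> qform A v <= qform B v.
Proof. by move=> AB; rewrite -subr_ge0 -qformB; apply: psd_qform. Qed.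

Lemma loewner_tr {n} (A B : 'M[C]_n) : loewner A B -> \tr A <= \tr B.
Proof. by move/psd_tr_ge0; rewrite linearB subr_ge0. Qed.

Lemma psd_diag {n} (h : 'rV[C]_n) : (forall i, 0 <= h 0 i) -> psd (diag_mx h).
Proof.
move=> h0; split=> [|v].
  apply/matrixP=> i j; rewrite !mxE; have [->|_] := eqVneq i j.
    by rewrite !mulr1n conj_Creal ?ger0_real.
  by rewrite !mulr0n conjC0.
rewrite mul_mx_diag !mxE; apply: sumr_ge0 => i _; rewrite !mxE mulrAC.
by apply: mulr_ge0 => //; rewrite mulrC mul_conjC_ge0.
Qed.

Lemma psd_sqrt_exists {n} (A : 'M[C]_n) : psd A -> exists S, psd S /\ S *m S = A.
Proof.
move=> pA; have nA : A \is normalmx by apply/normalmxP; rewrite trmxC_adjmx pA.1.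
have /orthomx_spectralP := nA.
set U := spectralmx A; set d := spectral_diag A.
have UU : U *m adjmx U = 1%:M.
  by rewrite -trmxC_adjmx; apply/unitarymxP; apply: spectral_unitarymx.
rewrite invmx_unitary ?spectral_unitarymx // trmxC_adjmx => eA.
have d0 i : 0 <= d 0 i.
  have := psd_qform (adjmx U *m delta_mx i 0) pA.
  by rewrite eA qform_conj mulmxA UU mul1mx qform_delta mxE eqxx mulr1n.
pose h := \row_i sqrtC (d 0 i).
exists (adjmx U *m diag_mx h *m U); split.
  by apply/psd_conj/psd_diag => i; rewrite mxE sqrtC_ge0.
rewrite eA !mulmxA -(mulmxA _ U) UU mulmx1 -(mulmxA (adjmx U)) mulmx_diag.
by congr (_ *m diag_mx _ *m _); apply/rowP=> j; rewrite !mxE -expr2 sqrtCK.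
Qed.

Lemma mx_sqrtP {n} (A : 'M[C]_n) : psd A -> psd (mx_sqrt A) /\ mx_sqrt A *m mx_sqrt A = A.
Proof. by move/psd_sqrt_exists; apply: ClassicalEpsilon.epsilon_spec. Qed.

Lemma psd_mx_sqrtE {n} (A : 'M[C]_n) : psd A -> A = adjmx (mx_sqrt A) *m mx_sqrt A.
Proof. by move=> pA; have [[-> _] ->] := mx_sqrtP pA. Qed.

Lemma psd_tens {m n} (A : 'M[C]_m) (B : 'M[C]_n) : psd A -> psd B -> psd (A *t B).
Proof.
move=> pA pB; rewrite (psd_mx_sqrtE pA) (psd_mx_sqrtE pB) -tensmx_mul -adjmx_tens.
exact: psd_gram.
Qed.

Lemma loewner_tens {m n} (A B : 'M[C]_m) (A' B' : 'M[C]_n) (a b : C) :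
  psd A -> psd B' -> 0 <= b -> loewner A (a *: B) -> loewner A' (b *: B') ->
  loewner (A *t A') ((a * b) *: (B *t B')).
Proof.
move=> pA pB' b0 AB AB'; rewrite /loewner.
have -> : (a * b) *: (B *t B') - A *t A' =
    (a *: B - A) *t (b *: B') + A *t (b *: B' - A').
  by apply/matrixP=> i j; rewrite !mxE; ring.
by apply: psdD; apply: psd_tens => //; apply: psdZ.
Qed.

Lemma psd_ntens {n} (A : 'M[C]_n) k : psd A -> psd (A ^t k).
Proof.
move=> pA; case: k => [|k]; first exact: psd1.
elim: k => [|k IHk]; first by rewrite ntensmx1.
by rewrite ntensmxSS; apply: psd_tens.
Qed.

Lemma loewner_ntens {n} (A B : 'M[C]_n) (a : C) k : psd A -> psd B -> 0 <= a ->
  loewner A (a *: B) -> loewner (A ^t k) (a ^+ k *: B ^t k).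
Proof.
move=> pA pB a0 AB; case: k => [|k].
  by rewrite /loewner expr0 scale1r subrr; exact: psd0.
elim: k => [|k IHk]; first by rewrite !ntensmx1 expr1.
rewrite !ntensmxSS exprS.
by apply: loewner_tens => //; [exact: (psd_ntens k.+1 pB) | exact: exprn_ge0].
Qed.

(** * Completely positive maps *)

Lemma linear_mapB {a b} (E : 'M[C]_a -> 'M[C]_b) X Y :
  linear_map E -> E (X - Y) = E X - E Y.
Proof. by move=> linE; rewrite -[X - Y]addrC -scaleN1r linE scaleN1r addrC. Qed.

Lemma linear_mapZ {a b} (E : 'M[C]_a -> 'M[C]_b) c X :
  linear_map E -> E (c *: X) = c *: E X.
Proof.
move=> linE; have E0 : E 0 = 0 by rewrite -(subrr X) linear_mapB // subrr.
by rewrite -[c *: X]addr0 linE E0 addr0.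
Qed.

Definition tens1_iso n : 'M[C]_(n, 1 * n) :=
  \matrix_(r, p) ((mxtens_unindex p).2 == r)%:R.
Definition tens1_isoV n : 'M[C]_(1 * n, n) :=
  \matrix_(p, s) (mxtens_index (ord0, s) == p)%:R.

Lemma tens1_isoK n : tens1_iso n *m tens1_isoV n = 1%:M.
Proof.
apply/matrixP=> r s; rewrite !mxE (bigD1 (mxtens_index (ord0, s))) //=.
rewrite !mxE mxtens_indexK eqxx mulr1 big1 ?addr0 => [|p /negbTE ps].
  by rewrite eq_sym.
by rewrite !mxE [_ == p]eq_sym ps mulr0.
Qed.

Lemma tens1_iso_conj n (Z : 'M[C]_n) :
  adjmx (tens1_iso n) *m Z *m tens1_iso n =
  \matrix_(p, q) Z (mxtens_unindex p).2 (mxtens_unindex q).2.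
Proof.
apply/matrixP=> p q; rewrite !mxE (bigD1 (mxtens_unindex q).2) //=.
rewrite big1 ?addr0 => [|r /negbTE rq]; last by rewrite !mxE eq_sym rq mulr0.
rewrite !mxE eqxx mulr1 (bigD1 (mxtens_unindex p).2) //= big1 ?addr0.
  by rewrite !mxE eqxx rmorph1 mul1r.
by move=> r /negbTE rp; rewrite !mxE eq_sym rp rmorph0 mul0r.
Qed.

(* Complete positivity at level 1 is positivity, once ['M_(1 * n)] is
   identified with ['M_n]. *)
Lemma CPmap_psd {a b} (E : 'M[C]_a -> 'M[C]_b) Y : CPmap E -> psd Y -> psd (E Y).
Proof.
move=> [_ cpE] pY; have := cpE 1%N _ (psd_conj (tens1_iso a) pY).
have -> : ampl E (adjmx (tens1_iso a) *m Y *m tens1_iso a) =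
    adjmx (tens1_iso b) *m E Y *m tens1_iso b.
  have blkY i j : blk (adjmx (tens1_iso a) *m Y *m tens1_iso a) i j = Y.
    by apply/matrixP=> r s; rewrite /blk tens1_iso_conj !mxE !mxtens_indexK.
  by rewrite [RHS]tens1_iso_conj; apply/matrixP=> p q; rewrite /ampl !mxE blkY.
move/(psd_conj (tens1_isoV b)).
by rewrite -!mulmxA mulmxA -adjmxM !mulmxA -mulmxA tens1_isoK adjmx1 mul1mx mulmx1.
Qed.

(** * Pure states and fidelity *)

Lemma Re_sqr_ge0 (x : C) : 0 <= x -> Re (x ^+ 2) = Re x ^+ 2.
Proof. by case: x => a b /ger0_Im /= ->; rewrite !expr2 /= mulr0 subr0. Qed.

Section PureState.
Variables (m : nat) (phi : 'cV[C]_m).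
Hypothesis unit_phi : unit_vec phi.
Local Notation P := (pureproj phi).

Lemma pureproj_idem : P *m P = P.
Proof. by rewrite /pureproj mulmxA -(mulmxA phi) unit_phi mulmx1. Qed.

Lemma adjmx_pureproj : adjmx P = P.
Proof. by rewrite /pureproj adjmxM adjmxK. Qed.

Lemma tr_pureproj : \tr P = 1.
Proof. by rewrite /pureproj mxtrace_mulC unit_phi mxtrace1. Qed.

Lemma psd_pureproj : psd P.
Proof. by have := psd_gram (adjmx phi); rewrite adjmxK. Qed.

Lemma pureproj_sandwich (X : 'M[C]_m) : P *m X *m P = qform X phi *: P.
Proof.
rewrite /pureproj /qform.
transitivity (phi *m (adjmx phi *m X *m phi) *m adjmx phi); first by rewrite !mulmxA.
by rewrite {1}[adjmx phi *m X *m phi]mx11_scalar mul_mx_scalar -scalemxAl.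
Qed.

(* [<phi|X|phi> + Tr ((1 - P) X (1 - P)) = Tr X] with both terms nonnegative. *)
Lemma qform_le_tr (X : 'M[C]_m) : psd X -> qform X phi <= \tr X.
Proof.
move=> pX; set Q := 1%:M - P.
have hQ : adjmx Q = Q by rewrite adjmxB adjmx1 adjmx_pureproj.
have QQ : Q *m Q = Q.
  by rewrite mulmxBl mul1mx mulmxBr mulmx1 pureproj_idem subrr subr0.
have -> : \tr X = qform X phi + \tr (adjmx Q *m X *m Q).
  rewrite hQ mxtrace_mulC mulmxA QQ mulmxBl mul1mx linearB /=.
  by rewrite /pureproj -mulmxA mxtrace_mulC /mxtrace big_ord1 addrC subrK.
by rewrite lerDl; apply/psd_tr_ge0/psd_conj.
Qed.

Lemma psd_sqrt_pureproj (S : 'M[C]_m) (c : C) :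
  psd S -> S *m S = c *: P -> S = qform S phi *: P /\ qform S phi ^+ 2 = c.
Proof.
move=> pS SS; set Q := 1%:M - P.
have QP : Q *m P = 0 by rewrite mulmxBl mul1mx pureproj_idem subrr.
have SQ : S *m Q = 0.
  apply: gram_eq0; rewrite adjmxM adjmxB adjmx1 adjmx_pureproj -/Q pS.1.
  by rewrite mulmxA -(mulmxA Q) SS -scalemxAr -scalemxAl QP mul0mx scaler0.
have SP : S = S *m P by rewrite -[LHS]mulmx1 -[1%:M](subrK P) mulmxDr SQ add0r.
have PS : S = P *m S by rewrite -[LHS]pS.1 {1}SP adjmxM adjmx_pureproj pS.1.
have SE : S = qform S phi *: P by rewrite -pureproj_sandwich -PS -SP.
split=> //; have := congr1 mxtrace SS.
rewrite {1 2}SE -scalemxAl -scalemxAr pureproj_idem scalerA -expr2.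
by rewrite !linearZ /= tr_pureproj !mulr1.
Qed.

Lemma mx_sqrt_pureproj : mx_sqrt P = P.
Proof.
have [pS SS] := mx_sqrtP psd_pureproj.
have [SE] := psd_sqrt_pureproj pS (etrans SS (esym (scale1r P))).
move/eqP; rewrite sqrf_eq1 => /orP[/eqP a1|/eqP aN1]; first by rewrite SE a1 scale1r.
by have := psd_qform phi pS; rewrite aN1 oppr_ge0 ler10.
Qed.

Lemma fidelity_pureproj (tau : 'M[C]_m) :
  psd tau -> fidelity tau P = Re (qform tau phi).
Proof.
move=> ptau; rewrite /fidelity /trnorm mx_sqrt_pureproj.
have [[hT _] TT] := mx_sqrtP ptau.
have -> : adjmx (mx_sqrt tau *m P) *m (mx_sqrt tau *m P) = qform tau phi *: P.
  by rewrite adjmxM adjmx_pureproj hT -mulmxA (mulmxA (mx_sqrt tau)) TT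
    mulmxA pureproj_sandwich.
have [pS SS] := mx_sqrtP (psdZ (psd_qform phi ptau) psd_pureproj).
set S := mx_sqrt _ in pS SS *; have [SE aa] := psd_sqrt_pureproj pS SS.
rewrite SE linearZ /= tr_pureproj mulr1 -Re_sqr_ge0 ?aa //; exact: psd_qform.
Qed.
End PureState.

(** * Robustness and free fidelity *)

Lemma Re_le (x y : C) : x <= y -> Re x <= Re y.
Proof. by rewrite lecE => /andP[]. Qed.

Lemma Re_rCM (a : R) (z : C) : Re (rC a * z) = a * Re z.
Proof. by case: z => x y; rewrite /= mul0r subr0. Qed.

Lemma ge0_rC_Re (x : C) : 0 <= x -> x = rC (Re x).
Proof. by case: x => a b /ger0_Im /= ->. Qed.

Lemma norm_Re_le (z : C) (r : R) : `|z| <= rC r -> `|Re z| <= r.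
Proof. by move=> zr; rewrite -lecR; apply: le_trans (normc_ge_Re z) zr. Qed.

Lemma loewner_density_ge1 {d} (X Y : 'M[C]_d) (l : R) :
  density X -> density Y -> loewner X (rC l *: Y) -> 1 <= l.
Proof.
by move=> [_ trX] [_ trY] /loewner_tr; rewrite linearZ /= trX trY mulr1 => /Re_le.
Qed.

Lemma Rmax_ge1 {d} (X Y : 'M[C]_d) : density X -> density Y -> (1 <= Rmax X Y)%E.
Proof.
move=> dX dY; apply/ereal_infP => _ [l XY <-].
by rewrite lee_fin (loewner_density_ge1 dX dY).
Qed.

Lemma Rmax_lt {d} (X Y : 'M[C]_d) (x : R) :
  (Rmax X Y < x%:E)%E -> exists2 l, loewner X (rC l *: Y) & l < x.
Proof. by move/ereal_inf_lt => [_ [l XY <-]]; rewrite lte_fin; exists l. Qed.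

Lemma Omega_lt {d} (F : set 'M[C]_d) (rho : 'M[C]_d) (O K : R) :
  density rho -> (forall s, F s -> density s) -> Omega F rho = O%:E -> O < K ->
  exists s l mu, [/\ F s, loewner rho (rC l *: s), loewner s (rC mu *: rho)
                   & l * mu < K].
Proof.
move=> drho dF OmO OK.
have /ereal_inf_lt[_ [s Fs <-] AB] : (Omega F rho < K%:E)%E by rewrite OmO lte_fin.
have ds := dF s Fs; have A1 := Rmax_ge1 drho ds; have B1 := Rmax_ge1 ds drho.
have A0 : (0 < Rmax rho s)%E by apply: lt_le_trans A1.
case Bb : (Rmax s rho) B1 AB => [b| |] B1 AB; last by rewrite leeNy_eq in B1.
  2: by rewrite gt0_muley in AB.
have b0 : 0 < b by rewrite lee_fin in B1; apply: lt_le_trans B1.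
(* Approximate [Rmax rho s] below [K / b] first, then [Rmax s rho] below [K / l]. *)
have [l rho_s lK] : exists2 l, loewner rho (rC l *: s) & l < K / b.
  apply: Rmax_lt; case: (Rmax rho s) A0 AB => [a| |] // _.
    by rewrite -EFinM !lte_fin ltr_pdivlMr.
  by rewrite mulyr gtr0_sg ?mul1e.
have l1 := loewner_density_ge1 drho ds rho_s.
have [mu s_rho muK] : exists2 mu, loewner s (rC mu *: rho) & mu < K / l.
  apply: Rmax_lt; rewrite Bb lte_fin ltr_pdivlMr ?(lt_le_trans ltr01) //.
  by rewrite mulrC -ltr_pdivlMr.
by exists s, l, mu; split=> //; rewrite mulrC -ltr_pdivlMr ?(lt_le_trans ltr01).
Qed.

Section FreeFidelity.
Variables (m : nat) (F : set 'M[C]_m) (phi : 'cV[C]_m).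
Hypotheses (freeF : free_set F) (unit_phi : unit_vec phi).

Lemma qform_le_FF s : F s -> Re (qform s phi) <= FF F phi.
Proof.
move=> Fs; have [_ [dF _]] := freeF; apply: sup_upper_bound; last by exists s.
split; first by exists (Re (qform s phi)), s.
exists 1 => _ [t Ft <-]; have [pt trt] := dF t Ft.
by have := Re_le (qform_le_tr unit_phi pt); rewrite trt.
Qed.

Lemma FF_ge0 : 0 <= FF F phi.
Proof.
have [[s Fs] [dF _]] := freeF.
by apply: le_trans (qform_le_FF Fs); apply/(Re_le (x := 0))/psd_qform; case: (dF s Fs).
Qed.

Lemma FF_le1 : FF F phi <= 1.
Proof.
have [[s Fs] [dF _]] := freeF; apply: ge_sup; first by exists (Re (qform s phi)), s.
move=> _ [t Ft <-]; have [pt trt] := dF t Ft.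
by have := Re_le (qform_le_tr unit_phi pt); rewrite trt.
Qed.
End FreeFidelity.

(** * Probabilistic transformations *)

Lemma qform_nongen_le {a m} (Fa : set 'M[C]_a) (Fb : set 'M[C]_m) E
    (X s : 'M[C]_a) (l mu : R) (phi : 'cV[C]_m) :
  free_set Fb -> unit_vec phi -> CPmap E -> nongen Fa Fb E -> Fa s -> psd X ->
  0 <= l -> 0 <= mu -> loewner X (rC l *: s) -> loewner s (rC mu *: X) ->
  Re (qform (E X) phi) * (1 - FF Fb phi) <=
    l * mu * FF Fb phi * (Re (\tr (E X)) - Re (qform (E X) phi)).
Proof.
move=> freeFb unit_phi cpE ngE Fs pX l0 mu0 Xs sX.
have [s' [Fs' [p [/andP[p0 _] Es]]]] := ngE s Fs.
have [ps' trs'] := freeFb.2.1 s' Fs'.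
have linE : linear_map E by case: cpE.
have pEX : psd (E X) := CPmap_psd cpE pX.
have EXs : loewner (E X) (rC (l * p) *: s').
  have -> : rC (l * p) *: s' = E (rC l *: s).
    by rewrite linear_mapZ // Es scalerA /rC rmorphM.
  by rewrite /loewner -linear_mapB //; apply: CPmap_psd.
have sEX : loewner (rC p *: s') (rC mu *: E X).
  by rewrite /loewner -Es -linear_mapZ // -linear_mapB //; apply: CPmap_psd.
apply: (@nongen_bound_real _ _ _ p (Re (qform s' phi))) => //.
- exact: Re_le (psd_qform phi pEX).
- exact: Re_le (psd_qform phi ps').
- exact: qform_le_FF.
- exact: FF_le1.
- by have := Re_le (loewner_qform phi EXs); rewrite qformZ Re_rCM.
have trD : \tr (rC mu *: E X - rC p *: s') = rC mu * \tr (E X) - rC p.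
  by rewrite mxtraceD mxtraceZ -scaleNr mxtraceZ trs' mulr1.
have := Re_le (qform_le_tr unit_phi sEX).
rewrite qformB !qformZ trD !raddfB /= !Re_rCM; lra.
Qed.

Lemma qform_norm_le {m} (D : 'M[C]_m) (v : 'cV[C]_m) (e : R) :
  (forall i j, `|D i j| <= rC e) -> `|qform D v| <= rC e * (\sum_i `|v i 0|) ^+ 2.
Proof.
move=> De; rewrite /qform mxE expr2 mulr_suml mulr_sumr.
apply: le_trans (ler_norm_sum _ _ _) _; apply: ler_sum => j _.
rewrite normrM mulrCA [X in X <= _]mulrC ler_wpM2l // mxE mulr_sumr.
apply: le_trans (ler_norm_sum _ _ _) _; apply: ler_sum => i _.
by rewrite adjmxE normrM norm_conjC [X in X <= _]mulrC ler_wpM2r.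
Qed.

Lemma qform_entrywise_close {m} (v : 'cV[C]_m) (e : R) : 0 < e ->
  exists2 d : R, 0 < d & forall A B : 'M[C]_m, (forall i j, `|A i j - B i j| < rC d) ->
    `|Re (qform A v) - Re (qform B v)| <= e.
Proof.
move=> e0; set S : C := (\sum_i `|v i 0|) ^+ 2.
have S0 : 0 <= S by rewrite exprn_ge0 ?sumr_ge0.
have SE := ge0_rC_Re S0.
have S'0 : 0 <= Re S := Re_le S0.
exists (e / (Re S + 1)) => [|A B AB]; first by rewrite divr_gt0 //; lra.
rewrite -raddfB -qformB; apply: norm_Re_le.
have AB' i j : `|(A - B) i j| <= rC (e / (Re S + 1)) by rewrite !mxE ltW.
apply: le_trans (qform_norm_le v AB') _.
rewrite -/S {2}SE /rC -rmorphM lecR mulrAC ler_pdivrMr; last lra.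
by rewrite ler_wpM2l //; [apply: ltW | lra].
Qed.

(* The constraint is linear in the normalized output, hence closed, so it
   survives the closure in the definition of [prob_trans]. *)
Lemma prob_trans_qform_le {a m} (Fa : set 'M[C]_a) (Fb : set 'M[C]_m)
    (omega : 'M[C]_a) (tau : 'M[C]_m) (phi : 'cV[C]_m) (alpha beta : R) :
  (forall E, opO Fa Fb E -> 0 < \tr (E omega) ->
     alpha * Re (qform (E omega) phi) <= beta * Re (\tr (E omega))) ->
  prob_trans Fa Fb omega tau -> alpha * Re (qform tau phi) <= beta.
Proof.
move=> bound ptr; apply/ler_addgt0Pr => e e0.
have a1 : 0 < `|alpha| + 1 by have := normr_ge0 alpha; lra.
have [d d0 close] := qform_entrywise_close phi (divr_gt0 e0 a1).
have [E [oE [t0 EC]]] := ptr d d0.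
set t := \tr (E omega) in t0 EC; set c := Re (qform (t^-1 *: E omega) phi).
have tE := ge0_rC_Re (ltW t0).
have t'0 : 0 < Re t by move: t0; rewrite ltcE => /andP[].
have cE : c = Re (qform (E omega) phi) / Re t.
  by rewrite /c qformZ {1}tE /rC -fmorphV Re_rCM mulrC.
have c_le : alpha * c <= beta by rewrite cE mulrA ler_pdivrMr // bound.
have /ler_normlP[cf _] :
    `|alpha * (c - Re (qform tau phi))| <= `|alpha| * (e / (`|alpha| + 1)).
  by rewrite normrM ler_wpM2l //; apply: close.
have ae : `|alpha| * (e / (`|alpha| + 1)) <= e by rewrite mulrA ler_pdivrMr //; nra.
lra.
Qed.

Lemma prob_trans_ntens_qform_le {d m} (Fin : set 'M[C]_d)
    (Fpow : forall k, set 'M[C]_(d ^ k)) (Fout : set 'M[C]_m) (rho s : 'M[C]_d)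
    (l mu : R) n (tau : 'M[C]_m) (phi : 'cV[C]_m) :
  free_set Fout -> unit_vec phi -> (forall s k, Fin s -> Fpow k (s ^t k)) ->
  Fin s -> psd rho -> psd s -> 0 <= l -> 0 <= mu ->
  loewner rho (rC l *: s) -> loewner s (rC mu *: rho) ->
  prob_trans (Fpow n) Fout (rho ^t n) tau ->
  Re (qform tau phi) * (1 - FF Fout phi) <=
    (l * mu) ^+ n * FF Fout phi * (1 - Re (qform tau phi)).
Proof.
move=> freeFout unit_phi Fpow_ntens Fs prho ps l0 mu0 rho_s s_rho ptr.
set f := FF Fout phi; set K := (l * mu) ^+ n.
suff : (1 - f + K * f) * Re (qform tau phi) <= K * f by lra.
apply: (prob_trans_qform_le _ ptr) => E [cpE [_ ngE]] _.
have rC_exprn x : rC x ^+ n = rC (x ^+ n) by rewrite /rC rmorphXn.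
have := qform_nongen_le freeFout unit_phi cpE ngE (Fpow_ntens s n Fs) (psd_ntens n prho)
  (exprn_ge0 n l0) (exprn_ge0 n mu0).
rewrite -!rC_exprn -exprMn -/K -/f.
have lC0 : (0 : C) <= rC l by rewrite /rC ler0c.
have muC0 : (0 : C) <= rC mu by rewrite /rC ler0c.
move=> /(_ (loewner_ntens n prho ps lC0 rho_s) (loewner_ntens n ps prho muC0 s_rho)).
lra.
Qed.

End QuantumResources.

Theorem corollary2 (R : realType) (d m : nat)
  (Fin : set 'M[R[i]]_d) (Fpow : forall k : nat, set 'M[R[i]]_(d ^ k))
  (Fout : set 'M[R[i]]_m) :
  free_set Fin -> (forall k, free_set (Fpow k)) -> free_set Fout ->
  (forall (s : 'M[R[i]]_d) (k : nat), Fin s -> Fpow k (ntensmx s k)) ->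
  forall (rho : 'M[R[i]]_d) (phi : 'cV[R[i]]_m) (eps : R) (n : nat)
         (tau : 'M[R[i]]_m),
  density rho -> unit_vec phi -> ~ Fout (pureproj phi) -> 0 < eps < 1 ->
  prob_trans (Fpow n) Fout (ntensmx rho n) tau -> density tau ->
  1 - eps <= fidelity tau (pureproj phi) ->
  forall O : R, Omega Fin rho = O%:E -> 1 < O -> 0 < FF Fout phi ->
  ln ((1 - eps) * (1 - FF Fout phi) / (eps * FF Fout phi)) / ln O <= n%:R.
Proof.
move=> freeFin _ freeFout Fpow_ntens rho phi eps n tau drho unit_phi _
  /andP[eps0 eps1] ptr dtau fid O OmO O1 FF0.
apply: ln_div_le_of_le_exprn O1 _; apply: ler_exprn_of_gt => K OK.
have dFin := freeFin.2.1.
have [s [l [mu [Fs rho_s s_rho lmuK]]]] := Omega_lt drho dFin OmO OK.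
have ds := dFin s Fs.
have l1 := loewner_density_ge1 drho ds rho_s.
have mu1 := loewner_density_ge1 ds drho s_rho.
have lmu0 : 0 <= l * mu by rewrite mulr_ge0 // (le_trans ler01).
have c_ge : 1 - eps <= complex.Re (qform tau phi).
  by rewrite -fidelity_pureproj //; case: dtau.
have f01 : 0 <= FF Fout phi <= 1 by rewrite FF_ge0 // FF_le1.
have := prob_trans_ntens_qform_le freeFout unit_phi Fpow_ntens Fs drho.1 ds.1
  (le_trans ler01 l1) (le_trans ler01 mu1) rho_s s_rho ptr.
move/(fidelity_bound_real f01 (exprn_ge0 n lmu0) c_ge).
rewrite ler_pdivrMr ?mulr_gt0 // => bound; apply: le_trans bound _.
have K0 : 0 <= K by rewrite (le_trans lmu0) ?ltW.
rewrite ler_wpM2r ?mulr_ge0 ?(ltW eps0) ?(ltW FF0) //.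
by apply: lerXn2r; rewrite ?nnegrE // ltW.
Qed.
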